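(* Let $0<r_j<\infty$ and $0<s_j<\infty$ for $j=1,\dots,n$, and let $\gamma(\mathbf{r})=\otimes_{j=1}^n\gamma(r_j)$, $\gamma(\mathbf{s})=\otimes_{j=1}^n\gamma(s_j)$. Then: (1) If $r_j\ge s_j$ for all $j$, then $D_\alpha(\gamma(\mathbf{r})\|\gamma(\mathbf{s}))<\infty$ for every $\alpha\in(0,1)\cup(1,\infty)$. (2) If $r_j<s_j$ for some $j$, then for $\alpha\in(0,1)\cup(1,\infty)$, $$D_\alpha(\gamma(\mathbf{r})\|\gamma(\mathbf{s}))<\infty\iff\alpha<\min\left\{\frac{s_j}{s_j-r_j}: j\in\{1,\dots,n\}\text{ such that } r_j<s_j\right\}.$$
   Context: One-mode Fock space: $\ell^2(\mathbb{Z}_{\ge 0})$ with orthonormal particle basis $\{|k\rangle\}$; $n$-mode space is the $n$-fold tensor product. For $0<s<\infty$, the thermal state is $\gamma(s)=(1-e^{-s})\sum_{k\ge0}e^{-ks}|k\rangle\langle k|$. For states $\rho=\sum_i p_i|x_i\rangle\langle x_i|$, $\sigma=\sum_j q_j|y_j\rangle\langle y_j|$ (spectral decompositions with orthonormal bases), the Petz–Rényi relative entropy is $D_\alpha(\rho\|\sigma)=\frac{1}{\alpha-1}\log\sum_{i,j}p_i^\alpha q_j^{1-\alpha}|\langle x_i|y_j\rangle|^2$ for $\alpha\in(0,1)\cup(1,\infty)$. *)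

From HB Require Import structures.
From mathcomp Require Import all_boot all_order all_algebra.
From mathcomp Require Import all_classical all_reals all_analysis.
Set Implicit Arguments. Unset Strict Implicit. Unset Printing Implicit Defensive.
Import Order.TTheory GRing.Theory Num.Theory.
Local Open Scope ring_scope.

Section Defs.
Variable R : realType.

Definition eln (x : \bar R) : \bar R :=
  match x with
  | EFin r => if r == 0 then -oo%E else (ln r)%:E
  | +oo%E => +oo%E
  | -oo%E => -oo%E
  end.

(* Petz-Renyi relative entropy of rho = sum_i p_i |x_i><x_i| and
   sigma = sum_j q_j |y_j><y_j| (spectral decompositions), where
   ov i j = |<x_i|y_j>|^2 :
     D_a = 1/(a-1) log sum_{i,j} p_i^a q_j^(1-a) |<x_i|y_j>|^2,
   the (nonnegative) double series being summed in [0,+oo]. *)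
Definition petz_D (I J : choiceType) (p : I -> R) (q : J -> R)
  (ov : I -> J -> R) (a : R) : \bar R :=
  ((a - 1)^-1)%:E *
  eln (esum [set: I * J] (fun ij => (p ij.1 `^ a * q ij.2 `^ (1 - a) * ov ij.1 ij.2)%:E)).

(* Index set of the orthonormal particle (Fock) basis of the n-mode space:
   |k> = |k_1> (x) ... (x) |k_n>, k : 'I_n -> nat. *)
Definition fock_index (n : nat) := {ffun 'I_n -> nat}.

(* |<k|k'>|^2 for the orthonormal product Fock basis vectors. *)
Definition fock_overlap (n : nat) (k k' : fock_index n) : R := (k == k')%:R.

(* Eigenvalue of the one-mode thermal state gamma(s) on |m>:
   (1 - e^{-s}) e^{-m s}. *)
Definition thermal1 (s : R) (m : nat) : R := (1 - expR (- s)) * expR (- (m%:R * s)).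

Definition thermal (n : nat) (s : 'I_n -> R) (k : fock_index n) : R :=
  \prod_(j < n) thermal1 (s j) (k j).

(* D_alpha(gamma(r) || gamma(s)), both states diagonal in the Fock basis. *)
Definition D_thermal (n : nat) (r s : 'I_n -> R) (a : R) : \bar R :=
  @petz_D (fock_index n) (fock_index n) (thermal r) (thermal s) (@fock_overlap n) a.

End Defs.

From HB Require Import structures.
From mathcomp Require Import all_boot all_order all_algebra.
From mathcomp Require Import all_classical all_reals all_analysis.
From mathcomp Require Import finmap.
From mathcomp Require Import ring lra.
Import Order.TTheory GRing.Theory Num.Theory.
Local Open Scope ring_scope.

Set Implicit Arguments. Unset Strict Implicit. Unset Printing Implicit Defensive.

(* Both states are diagonal in the Fock basis, so the Petz sum collapses to
   sum_k p_k^a q_k^(1-a), which factorises over the modes.  In mode j the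
   summand is geometric in the occupation number m with ratio
   exp(-(a r_j + (1-a) s_j)), so the sum is finite iff every rate
   a r_j + (1-a) s_j is positive.  This always holds when s_j <= r_j or
   a < 1, and for r_j < s_j it means exactly a < s_j / (s_j - r_j).  An
   infinite sum only matters for a > 1, where it makes D_a = +oo. *)

Lemma sum_geometric_le (R : realFieldType) (q : R) N :
  0 <= q < 1 -> \sum_(m < N) q ^+ m <= (1 - q)^-1.
Proof.
move=> /andP[q0 q1]; have q1' : 0 < 1 - q by rewrite subr_gt0.
have sumE : (1 - q) * \sum_(m < N) q ^+ m = 1 - q ^+ N.
  by rewrite -opprB mulNr -subrX1 opprB.
by rewrite -(ler_pM2l q1') mulfV ?gt_eqF // sumE gerBl exprn_ge0.
Qed.

Lemma powR_prod (R : realType) (I : Type) (t : seq I) (P : pred I)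
    (F : I -> R) (a : R) :
  (forall i, P i -> 0 <= F i) ->
  (\prod_(i <- t | P i) F i) `^ a = \prod_(i <- t | P i) F i `^ a.
Proof.
move=> F0; elim: t => [|i t IH]; first by rewrite !big_nil powR1.
rewrite !big_cons; case: ifP => // Pi.
by rewrite powRM ?IH ?F0 //; apply: prodr_ge0.
Qed.

Section esum_lemmas.
Local Open Scope classical_set_scope.
Variable R : realType.

Lemma esum_diag (I : choiceType) (f : I -> I -> R) :
  (forall i j, 0 <= f i j) ->
  esum [set: I * I] (fun ij => (f ij.1 ij.2 * (ij.1 == ij.2)%:R)%:E) =
  esum [set: I] (fun i => (f i i)%:E).
Proof.
move=> f0.
rewrite (esumID [set ij | ij.1 = ij.2]); last first.
  by move=> ij _; rewrite lee_fin mulr_ge0.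
rewrite [X in _ + X]esum1 ?adde0; last first.
  by move=> ij [_ /=] /eqP /negbTE ->; rewrite mulr0.
rewrite (_ : [set: I * I] `&` _ = (fun i => (i, i)) @` [set: I]); last first.
  apply/seteqP; split; first by move=> [i j] [_ /= ->]; exists j.
  by move=> _ [i _ <-]; split.
rewrite esum_image; last by move=> x y _ _ [].
by apply: eq_esum => i _ /=; rewrite eqxx mulr1.
Qed.

(* A finite set of multi-indices lies in a box {0..M}^n, on which the sum of
   the products is the product of the partial sums. *)
Lemma esum_ffun_prod_le n (g : 'I_n -> nat -> R) (B : 'I_n -> R) :
  (forall j m, 0 <= g j m) -> (forall j N, \sum_(m < N) g j m <= B j) ->
  (esum [set: {ffun 'I_n -> nat}] (fun k => (\prod_(j < n) g j (k j))%:E)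
     <= (\prod_(j < n) B j)%:E)%E.
Proof.
move=> g0 gB; apply: ge_ereal_sup => _ [X [finX _] <-].
pose M := (\max_(x <- enum_fset (fset_set X)) \max_(j < n) x j)%N.
have XM x j : X x -> (x j <= M)%N.
  move=> Xx; apply: (leq_trans (leq_bigmax j)).
  apply: (@leq_bigmax_seq _ _ xpredT (fun x : {ffun 'I_n -> nat} => \max_(j < n) x j)) => //.
  by rewrite in_fset_set //; apply/mem_set.
pose box (h : {ffun 'I_n -> 'I_M.+1}) : {ffun 'I_n -> nat} := [ffun j => val (h j)].
have box_inj : injective box.
  move=> h1 h2 /ffunP e; apply/ffunP => j; apply/val_inj.
  by have := e j; rewrite !ffunE.
have X_box : {subset X <= box @` [set: {ffun 'I_n -> 'I_M.+1}]}.
  move=> x /set_mem Xx; apply/mem_set; exists [ffun j => inord (x j)] => //.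
  by apply/ffunP => j; rewrite /box !ffunE /= inordK // ltnS XM.
apply: (le_trans (lee_fsum_nneg_subset finX (finite_image _ finite_finset) X_box _)).
  by move=> t _; rewrite lee_fin; apply: prodr_ge0.
rewrite fsbig_image; last by move=> x y _ _; apply: box_inj.
rewrite (_ : [set: {ffun 'I_n -> 'I_M.+1}] = [set` enum {ffun 'I_n -> 'I_M.+1}]); last first.
  by apply/seteqP; split => x //= _; rewrite mem_enum.
rewrite -fsbig_seq ?enum_uniq // big_enum /= sumEFin lee_fin.
rewrite (eq_bigr (fun h : {ffun 'I_n -> 'I_M.+1} => \prod_(j < n) g j (h j))); last first.
  by move=> h _; apply: eq_bigr => j _; rewrite ffunE.
rewrite -(bigA_distr_bigA (fun j (m : 'I_M.+1) => g j m)).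
by apply: ler_prod => j _; rewrite sumr_ge0 //= gB.
Qed.

Lemma esum_eq_pinfty (I : choiceType) (F : I -> R) (e : nat -> I) (C : R) :
  (forall k, 0 <= F k) -> injective e -> 0 < C -> (forall m, C <= F (e m)) ->
  esum [set: I] (fun k => (F k)%:E) = +oo%E.
Proof.
move=> F0 e_inj C0 CF.
have esum_ge N : ((N%:R * C)%:E <= esum [set: I] (fun k => (F k)%:E))%E.
  apply: esum_ge; exists (e @` `I_N); first by split => //; apply: finite_image.
  rewrite fsbig_image; last by move=> x y _ _; apply: e_inj.
  rewrite -(fsbig_ord _ N (fun m => (F (e m))%:E)) sumEFin lee_fin.
  apply: (le_trans _ (ler_sum _ (fun (m : 'I_N) _ => CF m))).
  by rewrite sumr_const card_ord mulr_natl.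
have : (0 <= esum [set: I] (fun k => (F k)%:E))%E.
  by apply: esum_ge0 => k _; rewrite lee_fin.
case: (esum _ _) esum_ge => [y| |] // esum_ge _.
have := truncnS_gt (y / C); rewrite ltr_pdivrMr // => yC.
by have := esum_ge (Num.truncn (y / C)).+1; rewrite lee_fin leNgt yC.
Qed.

End esum_lemmas.

Section mode.
Variable R : realType.
Implicit Types (a r s : R) (m : nat).

Definition mode_rate a r s := a * r + (1 - a) * s.

Definition mode_weight a r s m := thermal1 r m `^ a * thermal1 s m `^ (1 - a).

Lemma thermal1_gt0 s m : 0 < s -> 0 < thermal1 s m.
Proof.
by move=> s0; rewrite mulr_gt0 ?expR_gt0 // subr_gt0 expR_lt1 oppr_lt0.
Qed.

Lemma thermal1_geometric s m : thermal1 s m = thermal1 s 0 * expR (- s) ^+ m.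
Proof. by rewrite /thermal1 mul0r oppr0 expR0 mulr1 -expRM_natl mulrN. Qed.

Lemma mode_weight_gt0 a r s m : 0 < r -> 0 < s -> 0 < mode_weight a r s m.
Proof. by move=> r0 s0; rewrite mulr_gt0 // powR_gt0 // thermal1_gt0. Qed.

Lemma mode_weight_geometric a r s m : 0 < r -> 0 < s ->
  mode_weight a r s m = mode_weight a r s 0 * expR (- mode_rate a r s) ^+ m.
Proof.
move=> r0 s0; rewrite /mode_weight (thermal1_geometric r) (thermal1_geometric s).
rewrite (@powRM _ (thermal1 r 0)) 1?(@powRM _ (thermal1 s 0));
  rewrite ?(ltW (thermal1_gt0 _ _)) ?exprn_ge0 ?expR_ge0 //.
rewrite -!expRM_natl -!expRM mulrACA -expRD; congr (_ * expR _).
by rewrite /mode_rate; ring.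
Qed.

Lemma sum_mode_weight_le a r s N : 0 < r -> 0 < s -> 0 < mode_rate a r s ->
  \sum_(m < N) mode_weight a r s m <=
    mode_weight a r s 0 / (1 - expR (- mode_rate a r s)).
Proof.
move=> r0 s0 c0; under eq_bigr do rewrite mode_weight_geometric //.
rewrite -mulr_sumr ler_wpM2l ?(ltW (mode_weight_gt0 _ _ _ _)) // sum_geometric_le //.
by rewrite expR_ge0 expR_lt1 oppr_lt0.
Qed.

Lemma mode_rate_gt0_le a r s : 0 < a -> 0 < s -> s <= r -> 0 < mode_rate a r s.
Proof. by move=> a0 s0 sr; rewrite /mode_rate; nra. Qed.

Lemma mode_rate_gt0_lt1 a r s : 0 < a < 1 -> 0 < r -> 0 < s -> 0 < mode_rate a r s.
Proof. by move=> /andP[a0 a1] r0 s0; rewrite /mode_rate; nra. Qed.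

Lemma mode_rate_gt0E a r s : r < s -> (0 < mode_rate a r s) = (a < s / (s - r)).
Proof.
move=> rs; rewrite ltr_pdivlMr ?subr_gt0 // /mode_rate.
by apply/idP/idP => h; lra.
Qed.

End mode.

Section thermal_petz.
Local Open Scope classical_set_scope.
Variables (R : realType) (n : nat) (r s : 'I_n -> R) (a : R).
Hypotheses (hr : forall j, 0 < r j) (hs : forall j, 0 < s j).

Let weight (k : fock_index n) := \prod_(j < n) mode_weight a (r j) (s j) (k j).
Let petz_sum := esum [set: fock_index n] (fun k => (weight k)%:E).

Let weight_gt0 k : 0 < weight k.
Proof. by apply: prodr_gt0 => j _; apply: mode_weight_gt0. Qed.

Lemma thermal_powR_prod k :
  thermal r k `^ a * thermal s k `^ (1 - a) = weight k.
Proof.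
rewrite /thermal !powR_prod => [|j _|j _]; last 2 first.
- exact: ltW (thermal1_gt0 _ (hs j)).
- exact: ltW (thermal1_gt0 _ (hr j)).
by rewrite -big_split.
Qed.

Lemma D_thermalE : D_thermal r s a = (((a - 1)^-1)%:E * eln petz_sum)%E.
Proof.
rewrite /D_thermal /petz_D /fock_overlap; congr (_ * eln _)%E.
rewrite (@esum_diag _ _ (fun i j => thermal r i `^ a * thermal s j `^ (1 - a))).
  by apply: eq_esum => k _; rewrite thermal_powR_prod.
by move=> i j; rewrite mulr_ge0 ?powR_ge0.
Qed.

Lemma thermal_petz_sum_gt0 : (0 < petz_sum)%E.
Proof.
apply: (@lt_le_trans _ _ (weight [ffun => 0%N])%:E); first by rewrite lte_fin.
by apply: esum_ge; exists [set [ffun => 0%N]]; rewrite ?fsbig_set1.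
Qed.

Lemma thermal_petz_sum_lt_pinfty :
  (forall j, 0 < mode_rate a (r j) (s j)) -> (petz_sum < +oo)%E.
Proof.
move=> rate_gt0.
pose bound j := mode_weight a (r j) (s j) 0 / (1 - expR (- mode_rate a (r j) (s j))).
apply: (@le_lt_trans _ _ (\prod_(j < n) bound j)%:E); last exact: ltry.
apply: (@esum_ffun_prod_le _ _ (fun j => mode_weight a (r j) (s j))) => [j m|j N].
  exact/ltW/mode_weight_gt0.
exact: sum_mode_weight_le.
Qed.

(* Exciting only the mode j with a nonpositive rate gives weights that do not decay. *)
Lemma thermal_petz_sum_pinfty j :
  mode_rate a (r j) (s j) <= 0 -> petz_sum = +oo%E.
Proof.
move=> rate_le0; pose excite m : fock_index n := [ffun i => if i == j then m else 0%N].
apply: (@esum_eq_pinfty _ _ weight excite (weight [ffun => 0%N])).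
- by move=> k; apply: ltW.
- by move=> x y /ffunP /(_ j); rewrite !ffunE eqxx.
- exact: weight_gt0.
- move=> m; apply: ler_prod => i _; rewrite ltW ?mode_weight_gt0 //= !ffunE.
  rewrite [X in _ <= X]mode_weight_geometric // ler_peMr ?(ltW (mode_weight_gt0 _ _ _ _)) //.
  case: eqP => [->|_]; last by rewrite expr0.
  by rewrite exprn_ege1 // -expR0 ler_expR oppr_ge0.
Qed.

Lemma D_thermal_lt_pinfty : 0 < a -> a != 1 ->
  (D_thermal r s a < +oo)%E <-> forall j, 0 < mode_rate a (r j) (s j).
Proof.
move=> a0 a1; rewrite D_thermalE; split => [D_fin j|rate_gt0].
  rewrite ltNge; apply/negP => rate_le0; move: D_fin.
  rewrite (thermal_petz_sum_pinfty rate_le0) /= gt0_muley ?ltxx // lte_fin invr_gt0 subr_gt0.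
  case: ltgtP a1 => // a_lt1 _.
  by move: rate_le0; rewrite leNgt mode_rate_gt0_lt1 ?a0.
move: thermal_petz_sum_gt0 (thermal_petz_sum_lt_pinfty rate_gt0).
by case: petz_sum => // y; rewrite lte_fin => y0 _ /=; rewrite gt_eqF //= ltry.
Qed.

End thermal_petz.

Lemma mode_rates_gt0_iff (R : realType) n (r s : 'I_n -> R) (a : R) :
  0 < a -> (forall j, 0 < s j) ->
  (forall j, 0 < mode_rate a (r j) (s j)) <->
  (a%:E < \big[mine/+oo%E]_(j < n | (r j < s j)%R) (s j / (s j - r j))%:E)%E.
Proof.
move=> a0 hs; split => [rate_gt0|/bigmin_gtP[_ a_lt] j].
  by apply: lt_bigmin => [|j rs]; rewrite ?ltry // lte_fin -mode_rate_gt0E.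
case: (ltP (r j) (s j)) => [rs|sr]; last exact: mode_rate_gt0_le.
by rewrite mode_rate_gt0E // -lte_fin a_lt.
Qed.

Theorem corollary3p4 (R : realType) (n : nat) (r s : 'I_n -> R)
  (hr : forall j, 0 < r j) (hs : forall j, 0 < s j) :
  ((forall j, s j <= r j) ->
     forall a : R, 0 < a -> a != 1 -> (D_thermal r s a < +oo)%E)
  /\
  ((exists j, r j < s j) ->
     forall a : R, 0 < a -> a != 1 ->
       ((D_thermal r s a < +oo)%E <->
        (a%:E < \big[mine/+oo%E]_(j < n | (r j < s j)%R) (s j / (s j - r j))%:E)%E)).
Proof.
split=> [sr a a0 a1 | _ a a0 a1].
  by apply/(D_thermal_lt_pinfty hr hs a0 a1) => j; apply: mode_rate_gt0_le.
rewrite (D_thermal_lt_pinfty hr hs a0 a1); exact: mode_rates_gt0_iff.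
Qed.
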